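(* The canonical model $\mathcal M_c=(|\mathcal M_c|,\preccurlyeq_c,S_c,\ell_c)$ is a deterministic weak $\mathcal L_\Diamond$-quasimodel.
   Context: $\mathcal L_\Diamond$ is the propositional language with $\bot,\wedge,\vee,\to$ and unary modalities $\bigcirc$, $\Diamond$. ${\sf ITL}^0_\Diamond$ is the logic axiomatized by all intuitionistic propositional tautologies, $\neg\bigcirc\bot$, $\bigcirc\varphi\wedge\bigcirc\psi\to\bigcirc(\varphi\wedge\psi)$, $\bigcirc(\varphi\vee\psi)\to\bigcirc\varphi\vee\bigcirc\psi$, $\bigcirc(\varphi\to\psi)\to(\bigcirc\varphi\to\bigcirc\psi)$, $\varphi\vee\bigcirc\Diamond\varphi\to\Diamond\varphi$, closed under modus ponens and the rules $\varphi/\bigcirc\varphi$, $(\varphi\to\psi)/(\Diamond\varphi\to\Diamond\psi)$, $(\bigcirc\varphi\to\varphi)/(\Diamond\varphi\to\varphi)$. $\Gamma\vdash\Delta$ means ${\sf ITL}^0_\Diamond\vdash\bigwedge\Gamma'\to\bigvee\Delta'$ for some finite $\Gamma'\subseteq\Gamma$, $\Delta'\subseteq\Delta$. A prime type is a pair $\Phi=(\Phi^-,\Phi^+)$ of sets of formulas with $\Phi^-\cup\Phi^+=\mathcal L_\Diamond$ and $\Phi^+\not\vdash\Phi^-$. For $\Sigma$ closed under subformulas, a $\Sigma$-type is a pair $\Phi=(\Phi^-;\Phi^+)$ of subsets of $\Sigma$ with: $\Phi^-\cap\Phi^+=\varnothing$; $\Phi^-\cup\Phi^+=\Sigma$; $\bot\notin\Phi^+$;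 $\varphi\wedge\psi\in\Phi^+$ iff $\varphi,\psi\in\Phi^+$; $\varphi\vee\psi\in\Phi^+$ iff $\varphi\in\Phi^+$ or $\psi\in\Phi^+$; if $\varphi\to\psi\in\Phi^+$ then $\varphi\in\Phi^-$ or $\psi\in\Phi^+$; if $\Diamond\varphi\in\Phi^-$ then $\varphi\in\Phi^-$. $\Phi\preccurlyeq_T\Psi$ iff $\Phi^+\subseteq\Psi^+$. $\Phi\,S_T\,\Psi$ iff for all $\varphi$: $\bigcirc\varphi\in\Phi^+\Rightarrow\varphi\in\Psi^+$; $\bigcirc\varphi\in\Phi^-\Rightarrow\varphi\in\Psi^-$; ($\Diamond\varphi\in\Phi^+$ and $\varphi\in\Phi^-$) $\Rightarrow\Diamond\varphi\in\Psi^+$; $\Diamond\varphi\in\Phi^-\Rightarrow\Diamond\varphi\in\Psi^-$. A $\Sigma$-labelled frame is $(W,\preccurlyeq,\ell)$ with $\preccurlyeq$ a partial order, $\ell$ mapping $W$ to $\Sigma$-types, $w\preccurlyeq v\Rightarrow\ell(w)\preccurlyeq_T\ell(v)$, and whenever $\varphi\to\psi\in\ell^-(w)$ there is $v\succcurlyeq w$ with $\varphi\in\ell^+(v)$, $\psi\in\ell^-(v)$. A weak $\Sigma$-quasimodel is $(W,\preccurlyeq,S,\ell)$ with $(W,\preccurlyeq,\ell)$ a $\Sigma$-labelled frame and $S\subseteq W\times W$ forward-confluent (if $w\preccurlyeq w'$ and $w\,S\,v$ then some $v'\succcurlyeq v$ has $w'\,S\,v'$) and sensible ($w\,S\,v\Rightarrow\ell(w)\,S_T\,\ell(v)$);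 it is deterministic if $S$ is a function. The canonical model $\mathcal M_c$: domain the set of prime types, $\preccurlyeq_c$ is $\preccurlyeq_T$ restricted to prime types, $S_c$ is $S_T$ restricted to prime types, $\ell_c$ is the identity. *)

From Stdlib Require Import List.
Import ListNotations.

Inductive form : Type :=
| Var  : nat -> form
| Bot  : form
| And  : form -> form -> form
| Or   : form -> form -> form
| Imp  : form -> form -> form
| Next : form -> form
| Dia  : form -> form.

Definition Top : form := Imp Bot Bot.

(** * The logic ITL^0_Diamond (Hilbert style).
    "All intuitionistic propositional tautologies" are given by a standard
    schematic Hilbert axiomatization of intuitionistic propositional logic
    (instantiated over the whole language L_Diamond) together with modus ponens. *)
Inductive ITL0 : form -> Prop :=
| ax_K  : forall p q, ITL0 (Imp p (Imp q p))
| ax_S  : forall p q r,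
    ITL0 (Imp (Imp p (Imp q r)) (Imp (Imp p q) (Imp p r)))
| ax_andE1 : forall p q, ITL0 (Imp (And p q) p)
| ax_andE2 : forall p q, ITL0 (Imp (And p q) q)
| ax_andI  : forall p q, ITL0 (Imp p (Imp q (And p q)))
| ax_orI1  : forall p q, ITL0 (Imp p (Or p q))
| ax_orI2  : forall p q, ITL0 (Imp q (Or p q))
| ax_orE   : forall p q r,
    ITL0 (Imp (Imp p r) (Imp (Imp q r) (Imp (Or p q) r)))
| ax_efq   : forall p, ITL0 (Imp Bot p)
| ax_nextbot : ITL0 (Imp (Next Bot) Bot)
| ax_nextand : forall p q, ITL0 (Imp (And (Next p) (Next q)) (Next (And p q)))
| ax_nextor  : forall p q, ITL0 (Imp (Next (Or p q)) (Or (Next p) (Next q)))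
| ax_nextimp : forall p q, ITL0 (Imp (Next (Imp p q)) (Imp (Next p) (Next q)))
| ax_diafix  : forall p, ITL0 (Imp (Or p (Next (Dia p))) (Dia p))
| r_mp : forall p q, ITL0 (Imp p q) -> ITL0 p -> ITL0 q
| r_nec : forall p, ITL0 p -> ITL0 (Next p)
| r_diamon : forall p q, ITL0 (Imp p q) -> ITL0 (Imp (Dia p) (Dia q))
| r_ind : forall p, ITL0 (Imp (Next p) p) -> ITL0 (Imp (Dia p) p).

Definition fset := form -> Prop.

Definition bigAnd (l : list form) : form := fold_right And Top l.
Definition bigOr  (l : list form) : form := fold_right Or Bot l.

Definition entails (Gamma Delta : fset) : Prop :=
  exists (G D : list form),
    (forall f, In f G -> Gamma f) /\ (forall f, In f D -> Delta f) /\
    ITL0 (Imp (bigAnd G) (bigOr D)).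

Definition ftype := (fset * fset)%type.
Definition neg (P : ftype) : fset := fst P.
Definition pos (P : ftype) : fset := snd P.

Definition prime_type (P : ftype) : Prop :=
  (forall f, neg P f \/ pos P f) /\ ~ entails (pos P) (neg P).

Definition sigma_type (Sigma : fset) (P : ftype) : Prop :=
  (forall f, ~ (neg P f /\ pos P f)) /\
  (forall f, Sigma f <-> (neg P f \/ pos P f)) /\
  ~ pos P Bot /\
  (forall f g, Sigma (And f g) -> (pos P (And f g) <-> (pos P f /\ pos P g))) /\
  (forall f g, Sigma (Or f g) -> (pos P (Or f g) <-> (pos P f \/ pos P g))) /\
  (forall f g, pos P (Imp f g) -> neg P f \/ pos P g) /\
  (forall f, neg P (Dia f) -> neg P f).

Definition le_T (P Q : ftype) : Prop := forall f, pos P f -> pos Q f.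

Definition S_T (P Q : ftype) : Prop :=
  (forall f, pos P (Next f) -> pos Q f) /\
  (forall f, neg P (Next f) -> neg Q f) /\
  (forall f, pos P (Dia f) /\ neg P f -> pos Q (Dia f)) /\
  (forall f, neg P (Dia f) -> neg Q (Dia f)).

Definition partial_order {W : Type} (R : W -> W -> Prop) : Prop :=
  (forall w, R w w) /\
  (forall u v w, R u v -> R v w -> R u w) /\
  (forall u v, R u v -> R v u -> u = v).

Definition labelled_frame (Sigma : fset) {W : Type}
    (le : W -> W -> Prop) (l : W -> ftype) : Prop :=
  partial_order le /\
  (forall w, sigma_type Sigma (l w)) /\
  (forall w v, le w v -> le_T (l w) (l v)) /\
  (forall w f g, neg (l w) (Imp f g) ->
     exists v, le w v /\ pos (l v) f /\ neg (l v) g).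

Definition forward_confluent {W : Type} (le S : W -> W -> Prop) : Prop :=
  forall w w' v, le w w' -> S w v -> exists v', le v v' /\ S w' v'.

Definition sensible {W : Type} (S : W -> W -> Prop) (l : W -> ftype) : Prop :=
  forall w v, S w v -> S_T (l w) (l v).

Definition weak_quasimodel (Sigma : fset) {W : Type}
    (le S : W -> W -> Prop) (l : W -> ftype) : Prop :=
  labelled_frame Sigma le l /\ forward_confluent le S /\ sensible S l.

Definition is_function {W : Type} (S : W -> W -> Prop) : Prop :=
  forall w, exists v, S w v /\ forall v', S w v' -> v' = v.

Definition deterministic_weak_quasimodel (Sigma : fset) {W : Type}
    (le S : W -> W -> Prop) (l : W -> ftype) : Prop :=
  weak_quasimodel Sigma le S l /\ is_function S.

Definition Lang : fset := fun _ => True.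

Definition Wc : Type := { P : ftype | prime_type P }.
Definition le_c (x y : Wc) : Prop := le_T (proj1_sig x) (proj1_sig y).
Definition S_c (x y : Wc) : Prop := S_T (proj1_sig x) (proj1_sig y).
Definition l_c (x : Wc) : ftype := proj1_sig x.

(* A prime type is closed under derivability and has the disjunction
   property, so it satisfies every clause of an L-type.  The successor of a
   prime type Phi is forced: S_T Phi Psi already determines Psi^+ as
   {phi | Next phi in Phi^+}, and this "next" type is again prime because
   Next commutes with bot, /\ and \/ and with derivations (necessitation).
   The Diamond clauses of S_T come from the unfolding Dia phi -> phi \/ Next
   (Dia phi), obtained from the induction rule.  Implication witnesses are
   supplied by the Lindenbaum lemma, and forward confluence holds because
   the successor map is monotone. *)
From Stdlib Require Import List Classical FunctionalExtensionality
  PropExtensionality ProofIrrelevance PeanoNat.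
From Stdlib Require Cantor.
Import ListNotations.

Inductive derivable (H : list form) : form -> Prop :=
| derivable_hyp : forall f, In f H -> derivable H f
| derivable_thm : forall f, ITL0 f -> derivable H f
| derivable_mp : forall f g, derivable H (Imp f g) -> derivable H f -> derivable H g.

Lemma derivable_head H a : derivable (a :: H) a.
Proof. apply derivable_hyp; left; reflexivity. Qed.

Lemma derivable_thm_mp H p q : ITL0 (Imp p q) -> derivable H p -> derivable H q.
Proof. intros hpq hp; apply derivable_mp with p; [apply derivable_thm|]; assumption. Qed.

Lemma derivable_thm_mp2 H p q r :
  ITL0 (Imp p (Imp q r)) -> derivable H p -> derivable H q -> derivable H r.
Proof.
  intros hpqr hp hq; apply derivable_mp with q; [|assumption].
  apply derivable_thm_mp with p; assumption.
Qed.

Lemma ITL0_imp_refl p : ITL0 (Imp p p).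
Proof.
  apply r_mp with (Imp p (Imp p p)); [|apply ax_K].
  apply r_mp with (Imp p (Imp (Imp p p) p)); [apply ax_S|apply ax_K].
Qed.

Lemma derivable_deduction H a b : derivable (a :: H) b -> derivable H (Imp a b).
Proof.
  induction 1 as [f [<-|hf]|f hf|f g _ IHfg _ IHf].
  - apply derivable_thm, ITL0_imp_refl.
  - apply derivable_thm_mp with f; [apply ax_K|apply derivable_hyp; assumption].
  - apply derivable_thm_mp with f; [apply ax_K|apply derivable_thm; assumption].
  - apply derivable_thm_mp2 with (Imp a (Imp f g)) (Imp a f); [apply ax_S|..]; assumption.
Qed.

Lemma derivable_subst H H' f :
  derivable H f -> (forall x, In x H -> derivable H' x) -> derivable H' f.
Proof.
  induction 1; intros hH.
  - auto.
  - apply derivable_thm; assumption.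
  - apply derivable_mp with f; auto.
Qed.

Lemma derivable_weaken H H' f : derivable H f -> incl H H' -> derivable H' f.
Proof.
  intros hf hHH'; apply (derivable_subst _ _ _ hf).
  intros x hx; apply derivable_hyp, hHH', hx.
Qed.

Lemma derivable_nil f : derivable [] f -> ITL0 f.
Proof. induction 1 as [f []| |]; [assumption|eapply r_mp; eassumption]. Qed.

Lemma ITL0_of_derivable1 p q : derivable [p] q -> ITL0 (Imp p q).
Proof. intros h; apply derivable_nil, derivable_deduction, h. Qed.

Lemma derivable_orE H a b c :
  derivable H (Or a b) -> derivable (a :: H) c -> derivable (b :: H) c -> derivable H c.
Proof.
  intros hab hac hbc.
  apply derivable_deduction in hac; apply derivable_deduction in hbc.
  apply derivable_mp with (Or a b); [|assumption].
  apply derivable_thm_mp2 with (Imp a c) (Imp b c); [apply ax_orE|..]; assumption.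
Qed.

Lemma derivable_bigAnd G : derivable G (bigAnd G).
Proof.
  induction G as [|a G IHG]; simpl.
  - apply derivable_thm, ax_efq.
  - apply derivable_thm_mp2 with a (bigAnd G); [apply ax_andI|apply derivable_head|].
    apply (derivable_weaken _ _ _ IHG), incl_tl, incl_refl.
Qed.

Lemma derivable_of_bigAnd G x : In x G -> derivable [bigAnd G] x.
Proof.
  induction G as [|a G IHG]; simpl; intros hx; [destruct hx|].
  destruct hx as [->|hx].
  - apply derivable_thm_mp with (And x (bigAnd G)); [apply ax_andE1|apply derivable_head].
  - apply (derivable_subst _ _ _ (IHG hx)); intros y [<-|[]].
    apply derivable_thm_mp with (And a (bigAnd G)); [apply ax_andE2|apply derivable_head].
Qed.

Lemma ITL0_bigAnd_imp_iff G f : ITL0 (Imp (bigAnd G) f) <-> derivable G f.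
Proof.
  split; intros h.
  - apply derivable_thm_mp with (bigAnd G); [assumption|apply derivable_bigAnd].
  - apply derivable_nil, derivable_deduction, (derivable_subst _ _ _ h).
    intros; apply derivable_of_bigAnd; assumption.
Qed.

Lemma derivable_bigOr_intro H D x : In x D -> derivable H x -> derivable H (bigOr D).
Proof.
  induction D as [|a D IHD]; simpl; intros hx hHx; [destruct hx|].
  destruct hx as [->|hx].
  - apply derivable_thm_mp with x; [apply ax_orI1|assumption].
  - apply derivable_thm_mp with (bigOr D); [apply ax_orI2|auto].
Qed.

Lemma derivable_bigOr_incl D D' H :
  incl D D' -> derivable H (bigOr D) -> derivable H (bigOr D').
Proof.
  revert H; induction D as [|a D IHD]; simpl; intros H hDD' hD.
  - apply derivable_thm_mp with Bot; [apply ax_efq|assumption].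
  - apply derivable_orE with a (bigOr D); [assumption| |].
    + apply derivable_bigOr_intro with a; [apply hDD'; left; reflexivity|apply derivable_head].
    + apply IHD; [intros x hx; apply hDD'; right; exact hx|apply derivable_head].
Qed.

Lemma derivable_bigOr1 H g : derivable H (bigOr [g]) -> derivable H g.
Proof.
  intros h; apply derivable_orE with g Bot; [exact h|apply derivable_head|].
  apply derivable_thm_mp with Bot; [apply ax_efq|apply derivable_head].
Qed.

Lemma entails_iff_derivable (A B : fset) : entails A B <->
  exists G D, (forall f, In f G -> A f) /\ (forall f, In f D -> B f) /\
              derivable G (bigOr D).
Proof.
  unfold entails; split; intros (G & D & hG & hD & h);
    exists G, D; repeat split; try assumption; apply ITL0_bigAnd_imp_iff; assumption.
Qed.

Lemma entails_mono (A B A' B' : fset) :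
  entails A B -> (forall x, A x -> A' x) -> (forall x, B x -> B' x) -> entails A' B'.
Proof. intros (G & D & hG & hD & h) hA hB; exists G, D; auto. Qed.

Definition fadd (A : fset) (f : form) : fset := fun x => A x \/ x = f.

Lemma incl_fadd_split (A : fset) f G : (forall x, In x G -> fadd A f x) ->
  exists G', (forall x, In x G' -> A x) /\ incl G (f :: G').
Proof.
  induction G as [|a G IHG]; intros hG.
  - exists []; split; [intros _ []|intros _ []].
  - destruct IHG as (G' & hG' & hGG'); [intros x hx; apply hG; right; exact hx|].
    destruct (hG a (or_introl eq_refl)) as [ha| ->].
    + exists (a :: G'); split.
      * intros x [<-|hx]; auto.
      * intros x [<-|hx]; [right; left; reflexivity|].
        destruct (hGG' x hx) as [<-|hx']; [left|right; right]; auto.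
    + exists G'; split; [exact hG'|].
      intros x [<-|hx]; [left; reflexivity|auto].
Qed.

Lemma entails_cut (A B : fset) f :
  entails (fadd A f) B -> entails A (fadd B f) -> entails A B.
Proof.
  rewrite !entails_iff_derivable.
  intros (G1 & D1 & hG1 & hD1 & h1) (G2 & D2 & hG2 & hD2 & h2).
  destruct (incl_fadd_split A f G1 hG1) as (G1' & hG1' & hincl1).
  destruct (incl_fadd_split B f D2 hD2) as (D2' & hD2' & hincl2).
  exists (G1' ++ G2), (D1 ++ D2'); split; [|split].
  - intros x hx; apply in_app_iff in hx; destruct hx; auto.
  - intros x hx; apply in_app_iff in hx; destruct hx; auto.
  - apply derivable_orE with f (bigOr D2').
    + apply (derivable_bigOr_incl D2 (f :: D2')); [exact hincl2|].
      apply (derivable_weaken _ _ _ h2), incl_appr, incl_refl.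
    + apply (derivable_bigOr_incl D1); [apply incl_appl, incl_refl|].
      apply (derivable_weaken _ _ _ h1). intros x hx.
      destruct (hincl1 x hx) as [<-|hx']; [left; reflexivity|].
      right; apply in_app_iff; left; exact hx'.
    + apply (derivable_bigOr_incl D2'); [apply incl_appr, incl_refl|apply derivable_head].
Qed.

Lemma ITL0_dia_intro f : ITL0 (Imp f (Dia f)).
Proof.
  apply ITL0_of_derivable1, derivable_thm_mp with (Or f (Next (Dia f))); [apply ax_diafix|].
  apply derivable_thm_mp with f; [apply ax_orI1|apply derivable_head].
Qed.

Lemma ITL0_next_dia f : ITL0 (Imp (Next (Dia f)) (Dia f)).
Proof.
  apply ITL0_of_derivable1, derivable_thm_mp with (Or f (Next (Dia f))); [apply ax_diafix|].
  apply derivable_thm_mp with (Next (Dia f)); [apply ax_orI2|apply derivable_head].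
Qed.

(* The unfolding p := f \/ Next (Dia f) satisfies Next p -> p, so the
   induction rule gives Dia p -> p, and Dia f -> Dia p by monotonicity. *)
Lemma ITL0_dia_unfold f : ITL0 (Imp (Dia f) (Or f (Next (Dia f)))).
Proof.
  set (p := Or f (Next (Dia f))).
  assert (hind : ITL0 (Imp (Next p) p)).
  { apply ITL0_of_derivable1, derivable_orE with (Next f) (Next (Next (Dia f))).
    - apply derivable_thm_mp with (Next p); [apply ax_nextor|apply derivable_head].
    - apply derivable_thm_mp with (Next (Dia f)); [apply ax_orI2|].
      apply derivable_thm_mp2 with (Next (Imp f (Dia f))) (Next f);
        [apply ax_nextimp|apply derivable_thm, r_nec, ITL0_dia_intro|apply derivable_head].
    - apply derivable_thm_mp with (Next (Dia f)); [apply ax_orI2|].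
      apply derivable_thm_mp2 with (Next (Imp (Next (Dia f)) (Dia f))) (Next (Next (Dia f)));
        [apply ax_nextimp|apply derivable_thm, r_nec, ITL0_next_dia|apply derivable_head]. }
  assert (hmon : ITL0 (Imp (Dia f) (Dia p))).
  { apply r_diamon, ITL0_of_derivable1.
    apply derivable_thm_mp with f; [apply ax_orI1|apply derivable_head]. }
  apply ITL0_of_derivable1, derivable_thm_mp with (Dia p); [apply r_ind, hind|].
  apply derivable_thm_mp with (Dia f); [exact hmon|apply derivable_head].
Qed.

Lemma derivable_next G f : derivable G f -> derivable (map Next G) (Next f).
Proof.
  induction 1.
  - apply derivable_hyp, in_map; assumption.
  - apply derivable_thm, r_nec; assumption.
  - apply derivable_thm_mp2 with (Next (Imp f g)) (Next f); [apply ax_nextimp|..]; assumption.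
Qed.

Lemma derivable_next_bigOr D H :
  derivable H (Next (bigOr D)) -> derivable H (bigOr (map Next D)).
Proof.
  revert H; induction D as [|a D IHD]; simpl; intros H h.
  - apply derivable_thm_mp with (Next Bot); [apply ax_nextbot|exact h].
  - apply derivable_orE with (Next a) (Next (bigOr D)).
    + apply derivable_thm_mp with (Next (Or a (bigOr D))); [apply ax_nextor|exact h].
    + apply derivable_thm_mp with (Next a); [apply ax_orI1|apply derivable_head].
    + apply derivable_thm_mp with (bigOr (map Next D)); [apply ax_orI2|].
      apply IHD, derivable_head.
Qed.

Section PrimeType.
Variable P : ftype.
Hypothesis hP : prime_type P.

Lemma prime_bigOr G D : (forall x, In x G -> pos P x) ->
  derivable G (bigOr D) -> exists f, In f D /\ pos P f.
Proof.
  intros hG hD; apply NNPP; intros hno.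
  apply (proj2 hP), entails_iff_derivable; exists G, D; split; [exact hG|split; [|exact hD]].
  intros f hf; destruct (proj1 hP f) as [hn|hp]; [exact hn|].
  exfalso; apply hno; exists f; split; assumption.
Qed.

Lemma prime_closed G f : (forall x, In x G -> pos P x) -> derivable G f -> pos P f.
Proof.
  intros hG hf; destruct (prime_bigOr G [f] hG) as (g & [<-|[]] & hg); [|exact hg].
  apply derivable_bigOr_intro with f; [left|]; auto.
Qed.

Lemma prime_disjoint f : ~ (neg P f /\ pos P f).
Proof.
  intros [hn hp]; apply (proj2 hP), entails_iff_derivable; exists [f], [f].
  split; [intros x [<-|[]]; exact hp|split; [intros x [<-|[]]; exact hn|]].
  apply derivable_bigOr_intro with f; [left; reflexivity|apply derivable_head].
Qed.

Lemma prime_neg_iff f : neg P f <-> ~ pos P f.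
Proof.
  split; [intros hn hp; exact (prime_disjoint f (conj hn hp))|].
  intros hp; destruct (proj1 hP f); tauto.
Qed.

Lemma prime_closed1 f g : ITL0 (Imp f g) -> pos P f -> pos P g.
Proof.
  intros hfg hf; apply prime_closed with [f]; [intros x [<-|[]]; exact hf|].
  apply derivable_thm_mp with f; [exact hfg|apply derivable_head].
Qed.

Lemma prime_or f g : pos P (Or f g) -> pos P f \/ pos P g.
Proof.
  intros hfg; destruct (prime_bigOr [Or f g] [f; g]) as (h & hin & hh).
  - intros x [<-|[]]; exact hfg.
  - apply derivable_orE with f g; [apply derivable_head|..];
      [apply derivable_bigOr_intro with f|apply derivable_bigOr_intro with g];
      simpl; auto; apply derivable_head.
  - destruct hin as [<-|[<-|[]]]; auto.
Qed.

Lemma prime_sigma_type : sigma_type Lang P.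
Proof.
  split; [exact prime_disjoint|split; [|split; [|split; [|split; [|split]]]]].
  - intros f; split; [intros _; apply (proj1 hP)|intros _; exact I].
  - intros hbot; destruct (prime_bigOr [Bot] []) as (? & [] & _).
    + intros x [<-|[]]; exact hbot.
    + apply derivable_head.
  - intros f g _; split.
    + intros hfg; split;
        [apply prime_closed1 with (And f g); [apply ax_andE1|exact hfg]
        |apply prime_closed1 with (And f g); [apply ax_andE2|exact hfg]].
    + intros [hf hg]; apply prime_closed with [f; g]; [intros x [<-|[<-|[]]]; assumption|].
      apply derivable_thm_mp2 with f g; [apply ax_andI|apply derivable_head|].
      apply derivable_hyp; right; left; reflexivity.
  - intros f g _; split; [apply prime_or|].
    intros [hf|hg]; [apply prime_closed1 with f; [apply ax_orI1|exact hf]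
                    |apply prime_closed1 with g; [apply ax_orI2|exact hg]].
  - intros f g hfg; rewrite prime_neg_iff.
    destruct (classic (pos P f)) as [hf|hf]; [right|left; exact hf].
    apply prime_closed with [Imp f g; f]; [intros x [<-|[<-|[]]]; assumption|].
    apply derivable_mp with f; apply derivable_hyp; simpl; auto.
  - intros f; rewrite !prime_neg_iff; intros hdia hf.
    apply hdia, prime_closed1 with f; [apply ITL0_dia_intro|exact hf].
Qed.

End PrimeType.

Lemma prime_pos_iff P f : prime_type P -> (pos P f <-> ~ neg P f).
Proof. intros hP; rewrite (prime_neg_iff P hP); tauto. Qed.

(* The type {phi | Next phi in P}: the only possible S_T-successor of P. *)
Definition next_type (P : ftype) : ftype :=
  (fun f => neg P (Next f), fun f => pos P (Next f)).

Lemma next_type_prime P : prime_type P -> prime_type (next_type P).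
Proof.
  intros hP; split; [intros f; apply (proj1 hP)|].
  rewrite entails_iff_derivable; intros (G & D & hG & hD & h).
  apply (proj2 hP), entails_iff_derivable; exists (map Next G), (map Next D).
  split; [|split].
  - intros f hf; apply in_map_iff in hf; destruct hf as (x & <- & hx); apply hG, hx.
  - intros f hf; apply in_map_iff in hf; destruct hf as (x & <- & hx); apply hD, hx.
  - apply derivable_next_bigOr, derivable_next, h.
Qed.

Lemma S_T_next_type P : prime_type P -> S_T P (next_type P).
Proof.
  intros hP; split; [|split; [|split]]; simpl; auto.
  - intros f [hdia hf].
    apply (prime_closed1 P hP _ _ (ITL0_dia_unfold f)), (prime_or P hP) in hdia.
    destruct hdia as [hf'|hnext]; [|exact hnext].
    exfalso; exact (prime_disjoint P hP f (conj hf hf')).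
  - intros f hdia; rewrite (prime_neg_iff P hP) in *; intros hnext.
    exact (hdia (prime_closed1 P hP _ _ (ITL0_next_dia f) hnext)).
Qed.

Lemma S_T_pos_iff P Q : prime_type P -> prime_type Q -> S_T P Q ->
  forall f, pos Q f <-> pos P (Next f).
Proof.
  intros hP hQ hPQ f; split; [|apply (proj1 hPQ)].
  intros hf; apply (prime_pos_iff P _ hP); intros hn.
  exact (prime_disjoint Q hQ f (conj (proj1 (proj2 hPQ) f hn) hf)).
Qed.

Fixpoint code (f : form) : nat :=
  match f with
  | Var n => Cantor.to_nat (0, n)
  | Bot => Cantor.to_nat (1, 0)
  | And a b => Cantor.to_nat (2, Cantor.to_nat (code a, code b))
  | Or a b => Cantor.to_nat (3, Cantor.to_nat (code a, code b))
  | Imp a b => Cantor.to_nat (4, Cantor.to_nat (code a, code b))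
  | Next a => Cantor.to_nat (5, code a)
  | Dia a => Cantor.to_nat (6, code a)
  end.

Lemma code_inj f g : code f = code g -> f = g.
Proof.
  revert g; induction f; intros [] h; cbn [code] in h;
    repeat match goal with
           | h : Cantor.to_nat _ = Cantor.to_nat _ |- _ =>
               apply Cantor.to_nat_inj, pair_equal_spec in h as [? ?]
           end;
    try discriminate; f_equal; auto.
Qed.

Section Lindenbaum.
Variables Gam Del : fset.

(* Stage n decides the formula with code n (if any): it goes to the right
   exactly when adding it to the left would make the pair entail. *)
Fixpoint lind_chain (n : nat) : ftype :=
  match n with
  | 0 => (Gam, Del)
  | S m =>
    let A := fst (lind_chain m) in
    let B := snd (lind_chain m) in
    (fun f => A f \/ (code f = m /\ ~ entails (fadd A f) B),
     fun f => B f \/ (code f = m /\ entails (fadd A f) B))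
  end.

Lemma lind_chain_consistent : ~ entails Gam Del ->
  forall n, ~ entails (fst (lind_chain n)) (snd (lind_chain n)).
Proof.
  intros h0; induction n as [|n IHn]; simpl; [exact h0|].
  set (A := fst (lind_chain n)) in *; set (B := snd (lind_chain n)) in *.
  intros hent; apply IHn.
  destruct (classic (exists f, code f = n)) as [[f hf]|hno].
  - assert (hcode : forall x, code x = n -> x = f) by (intros x hx; apply code_inj; congruence).
    destruct (classic (entails (fadd A f) B)) as [hl|hl].
    + apply (entails_cut A B f hl), (entails_mono _ _ _ _ hent).
      * intros x [hx|[hx hn]]; [exact hx|exfalso; rewrite (hcode x hx) in hn; tauto].
      * intros x [hx|[hx _]]; [left; exact hx|right; apply hcode, hx].
    + exfalso; apply hl, (entails_mono _ _ _ _ hent).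
      * intros x [hx|[hx _]]; [left; exact hx|right; apply hcode, hx].
      * intros x [hx|[hx hn]]; [exact hx|exfalso; rewrite (hcode x hx) in hn; tauto].
  - apply (entails_mono _ _ _ _ hent); intros x [hx|[hx _]]; auto; exfalso; eauto.
Qed.

Lemma lind_chain_mono m n : m <= n -> forall f,
  (fst (lind_chain m) f -> fst (lind_chain n) f) /\
  (snd (lind_chain m) f -> snd (lind_chain n) f).
Proof. induction 1; intros f; [tauto|simpl; firstorder]. Qed.

Lemma increasing_family_bound (F : nat -> fset) :
  (forall m n x, m <= n -> F m x -> F n x) ->
  forall G, (forall x, In x G -> exists n, F n x) -> exists N, forall x, In x G -> F N x.
Proof.
  intros hmono; induction G as [|a G IHG]; intros hG.
  - exists 0; intros x [].
  - destruct IHG as [N hN]; [intros x hx; apply hG; right; exact hx|].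
    destruct (hG a (or_introl eq_refl)) as [k hk].
    exists (max N k); intros x [<-|hx].
    + apply hmono with k; [apply Nat.le_max_r|exact hk].
    + apply hmono with N; [apply Nat.le_max_l|apply hN, hx].
Qed.

Lemma lindenbaum : ~ entails Gam Del ->
  exists P, prime_type P /\ (forall f, Gam f -> pos P f) /\ (forall f, Del f -> neg P f).
Proof.
  intros h0.
  exists (fun f => exists n, snd (lind_chain n) f, fun f => exists n, fst (lind_chain n) f).
  split; [split|split; intros f hf; exists 0; exact hf].
  - intros f; simpl.
    destruct (classic (entails (fadd (fst (lind_chain (code f))) f) (snd (lind_chain (code f)))));
      [left|right]; exists (S (code f)); simpl; auto.
  - rewrite entails_iff_derivable; intros (G & D & hG & hD & h); simpl in hG, hD.
    destruct (increasing_family_bound (fun n => fst (lind_chain n))) with G as [N1 hN1];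
      [intros m n x hmn; apply (lind_chain_mono m n hmn)|exact hG|].
    destruct (increasing_family_bound (fun n => snd (lind_chain n))) with D as [N2 hN2];
      [intros m n x hmn; apply (lind_chain_mono m n hmn)|exact hD|].
    apply (lind_chain_consistent h0 (max N1 N2)), entails_iff_derivable.
    exists G, D; split; [|split; [|exact h]]; intros x hx.
    + apply (lind_chain_mono N1); [apply Nat.le_max_l|apply hN1, hx].
    + apply (lind_chain_mono N2); [apply Nat.le_max_r|apply hN2, hx].
Qed.

End Lindenbaum.

Lemma Wc_eq (x y : Wc) : (forall f, pos (l_c x) f <-> pos (l_c y) f) -> x = y.
Proof.
  destruct x as [[n1 p1] h1], y as [[n2 p2] h2]; unfold l_c; simpl; intros hpos.
  assert (ep : p1 = p2).
  { apply functional_extensionality; intros f; apply propositional_extensionality, hpos. }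
  subst p2.
  assert (en : n1 = n2).
  { apply functional_extensionality; intros f; apply propositional_extensionality.
    rewrite (prime_neg_iff (n1, p1) h1 f), (prime_neg_iff (n2, p1) h2 f); reflexivity. }
  subst n2; f_equal; apply proof_irrelevance.
Qed.

Lemma le_c_partial_order : partial_order le_c.
Proof.
  split; [|split].
  - intros w f hf; exact hf.
  - intros u v w huv hvw f hf; apply hvw, huv, hf.
  - intros u v huv hvu; apply Wc_eq; intros f; split; [apply huv|apply hvu].
Qed.

Lemma canonical_imp_witness (w : Wc) f g : neg (l_c w) (Imp f g) ->
  exists v, le_c w v /\ pos (l_c v) f /\ neg (l_c v) g.
Proof.
  destruct w as [P hP]; unfold le_c, l_c; simpl; intros himp.
  destruct (lindenbaum (fadd (pos P) f) (fun x => x = g)) as (Q & hQ & hPQ & hgQ).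
  - rewrite entails_iff_derivable; intros (G & D & hG & hD & h).
    destruct (incl_fadd_split _ f G hG) as (G' & hG' & hGG').
    apply (prime_disjoint P hP (Imp f g)); split; [exact himp|].
    apply (prime_closed P hP G' _ hG'), derivable_deduction, derivable_bigOr1.
    apply (derivable_bigOr_incl D); [intros x hx; rewrite (hD x hx); left; reflexivity|].
    apply (derivable_weaken _ _ _ h hGG').
  - exists (exist _ Q hQ); simpl; split; [|split].
    + intros x hx; apply hPQ; left; exact hx.
    + apply hPQ; right; reflexivity.
    + apply hgQ; reflexivity.
Qed.

Lemma canonical_labelled_frame : labelled_frame Lang le_c l_c.
Proof.
  split; [exact le_c_partial_order|split; [|split]].
  - intros w; apply prime_sigma_type, (proj2_sig w).
  - intros w v hwv; exact hwv.
  - exact canonical_imp_witness.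
Qed.

Definition next_c (w : Wc) : Wc :=
  exist _ (next_type (l_c w)) (next_type_prime _ (proj2_sig w)).

Lemma S_c_next_c w : S_c w (next_c w).
Proof. apply S_T_next_type, (proj2_sig w). Qed.

Lemma S_c_eq_next_c w v : S_c w v -> v = next_c w.
Proof.
  intros hwv; apply Wc_eq; intros f.
  rewrite (S_T_pos_iff _ _ (proj2_sig w) (proj2_sig v) hwv f); reflexivity.
Qed.

Lemma S_c_forward_confluent : forward_confluent le_c S_c.
Proof.
  intros w w' v hww' hwv; exists (next_c w'); split; [|apply S_c_next_c].
  rewrite (S_c_eq_next_c w v hwv); intros f hf; apply hww', hf.
Qed.

Theorem proposition4p4 : deterministic_weak_quasimodel Lang le_c S_c l_c.
Proof.
  split; [split; [exact canonical_labelled_frame|split]|].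
  - exact S_c_forward_confluent.
  - intros w v hwv; exact hwv.
  - intros w; exists (next_c w); split; [apply S_c_next_c|apply S_c_eq_next_c].
Qed.
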